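(* Let $F=\langle f_1,\ldots,f_k\rangle$ be a normalized solution to an instance $(\mathcal{T}_{initial},\mathcal{T}_{final},k)$ of Flip Distance, and let $C$ be a component of $\mathcal{D}_F$. Let $f_i$ and $f_h$, with $i<h$, be two flips in $C$ such that $\phi(f_h)=\epsilon(f_i)$ and $\epsilon(f_i)$ is not flipped between $f_i$ and $f_h$ (i.e., there is no $p$ with $i<p<h$ and $\epsilon(f_p)=\epsilon(f_i)$). Then there is a directed path from $f_i$ to $f_h$ in $C$.
   Context: A triangulation of a finite point set $\mathcal{P}$ in the plane is a partition of the convex hull of $\mathcal{P}$ into triangles whose vertex set is $\mathcal{P}$. For an interior edge $e$ of a triangulation $\mathcal{T}$, the quadrilateral associated with $e$ is the union of the two triangles of $\mathcal{T}$ sharing $e$. A flip $f$ with underlying edge $\epsilon(f)=e$ is admissible in $\mathcal{T}$ if $e\in\mathcal{T}$ and its associated quadrilateral is convex; performing it replaces $e$ by the other diagonal $\phi(f)$ of that quadrilateral. Two distinct edges share a triangle in $\mathcal{T}$ if they are edges of the same triangle of $\mathcal{T}$. A sequence $F=\langle f_1,\ldots,f_r\rangle$ is valid with respect to $\mathcal{T}$ if there are triangulations $\mathcal{T}_0=\mathcal{T},\mathcal{T}_1,\ldots,\mathcal{T}_r$ such that $f_i$ is admissible in $\mathcal{T}_{i-1}$ and performing it yields $\mathcal{T}_i$; then we write $\mathcal{T}\xrightarrow{F}\mathcal{T}_r$. Flips in a sequence are distinct objects even if they have the same underlying edge. For $1\le i<j\le r$, flip $f_j$ is adjacent to $f_i$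 (written $f_i\to f_j$) if (1) either $\phi(f_i)=\epsilon(f_j)$ or $\phi(f_i)$ and $\epsilon(f_j)$ share a triangle in $\mathcal{T}_{j-1}$, and (2) there is no $p$ with $i<p<j$ and $\epsilon(f_p)=\phi(f_i)$. $\mathcal{D}_F$ is the directed acyclic graph whose nodes are the flips of $F$ and whose arcs are the pairs $f_i\to f_j$; a component of it is a weakly connected component. The flip distance between two triangulations is the minimum length of a valid sequence transforming one into the other. An instance $(\mathcal{T}_{initial},\mathcal{T}_{final},k)$ of Flip Distance consists of two triangulations of $\mathcal{P}$ and $k\in\mathbb{N}$; a solution is a valid sequence $F$ of length $k$ with $\mathcal{T}_{initial}\xrightarrow{F}\mathcal{T}_{final}$, where $k$ is the flip distance between them. For a solution $F=\langle f_1,\ldots,f_k\rangle$, $\mathcal{T}_j$ denotes the outcome of applying $\langle f_1,\ldots,f_j\rangle$ to $\mathcal{T}_{initial}$. A changed edge is an edge of $\mathcal{T}_{initial}$ not in $\mathcal{T}_{final}$; a component of $\mathcal{D}_F$ is essential if it contains a flip whose underlying edge is a changed edge. A solution $F$ is normalized if every component of $\mathcal{D}_F$ is essential and the flips of each component of $\mathcal{D}_F$ appear as a consecutive block in $F$. *)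

From HB Require Import structures.
From mathcomp Require Import all_boot all_order all_algebra.
Set Implicit Arguments. Unset Strict Implicit. Unset Printing Implicit Defensive.
Import Order.TTheory GRing.Theory Num.Theory.
Local Open Scope ring_scope.

Section Geometry.
Variables (R : realFieldType) (n : nat) (p : 'I_n -> 'rV[R]_2).
(* The point set P is {p i | i < n} (p injective); points are referred to
   by their index, edges are 2-element index sets, triangles 3-element sets. *)

Definition in_hull (S : {set 'I_n}) (x : 'rV[R]_2) : Prop :=
  exists w : 'I_n -> R,
    [/\ forall i, i \notin S -> w i = 0,
        forall i, 0 <= w i,
        \sum_i w i = 1 &
        \sum_i w i *: p i = x].

Definition in_open (S : {set 'I_n}) (x : 'rV[R]_2) : Prop :=
  exists w : 'I_n -> R,
    [/\ forall i, i \notin S -> w i = 0,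
        forall i, i \in S -> 0 < w i,
        \sum_i w i = 1 &
        \sum_i w i *: p i = x].

Definition aff_indep (S : {set 'I_n}) : Prop :=
  forall w : 'I_n -> R, (forall i, i \notin S -> w i = 0) ->
    \sum_i w i = 0 -> \sum_i w i *: p i = 0 -> forall i, w i = 0.

(* T is a triangulation of P: a set of non-degenerate triangles with vertices
   in P, with pairwise disjoint interiors, whose union is conv(P), and such that
   no point of P lies on a triangle except at its vertices (so the vertex set
   is P and triangles meet face to face). *)
Definition triangulation (T : {set {set 'I_n}}) : Prop :=
  [/\ forall t, t \in T -> #|t| = 3 /\ aff_indep t,
      forall x, in_hull setT x <-> exists2 t, t \in T & in_hull t x,
      forall t1 t2 x, t1 \in T -> t2 \in T -> t1 != t2 ->
        in_open t1 x -> in_open t2 x -> False &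
      forall t i, t \in T -> in_hull t (p i) -> i \in t].

Definition conv_position (Q : {set 'I_n}) : Prop :=
  forall v, v \in Q -> ~ in_hull (Q :\ v) (p v).

End Geometry.

Section Flips.
Variable n : nat.
Implicit Types (T : {set {set 'I_n}}) (e : {set 'I_n}) (F : seq {set 'I_n}).

Definition is_edge T e : bool := (#|e| == 2) && [exists t in T, e \subset t].

Definition tris_of T e : {set {set 'I_n}} := [set t in T | e \subset t].

Definition quad T e : {set 'I_n} := \bigcup_(t in tris_of T e) t.

Definition flip_diag T e : {set 'I_n} := quad T e :\: e.

Definition do_flip T e : {set {set 'I_n}} :=
  (T :\: tris_of T e) :|: [set flip_diag T e :|: [set v] | v in e].

Definition tri_after T F (j : nat) : {set {set 'I_n}} := foldl do_flip T (take j F).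

(* underlying edge of the (j+1)-th flip (0-based index j) *)
Definition eps F (j : nat) : {set 'I_n} := nth set0 F j.

(* phi of the (j+1)-th flip *)
Definition phi_at T F (j : nat) : {set 'I_n} := flip_diag (tri_after T F j) (eps F j).

End Flips.

Section Admissible.
Variables (R : realFieldType) (n : nat) (p : 'I_n -> 'rV[R]_2).
Implicit Types (T : {set {set 'I_n}}) (e : {set 'I_n}) (F : seq {set 'I_n}).

Definition admissible T e : Prop :=
  [/\ is_edge T e, #|tris_of T e| = 2 & conv_position p (quad T e)].

Definition valid T F : Prop :=
  forall j, (j < size F)%N -> admissible (tri_after T F j) (eps F j).

Definition transforms T F T' : Prop := valid T F /\ tri_after T F (size F) = T'.

Definition is_solution Tinit Tfinal F : Prop :=
  [/\ triangulation p Tinit, triangulation p Tfinal,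
      transforms Tinit F Tfinal &
      forall G, transforms Tinit G Tfinal -> (size F <= size G)%N].

End Admissible.

Section DAG.
Local Unset Implicit Arguments.
Variable n : nat.
Implicit Types (T : {set {set 'I_n}}) (e : {set 'I_n}) (F : seq {set 'I_n}).

(* f_{i+1} -> f_{j+1} (0-based indices i < j) *)
Definition flip_adj T F (i j : nat) : bool :=
  [&& (i < j)%N, (j < size F)%N,
      (phi_at T F i == eps F j) ||
      [exists t in tri_after T F j,
         [&& phi_at T F i \subset t, eps F j \subset t & phi_at T F i != eps F j]] &
      all (fun q => eps F q != phi_at T F i) (iota i.+1 (j - i.+1))].

Definition DF T F : rel 'I_(size F) := fun a b => flip_adj T F a b.

Definition same_comp T F (a b : 'I_(size F)) : bool :=
  connect (fun x y : 'I_(size F) => DF T F x y || DF T F y x) a b.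

Definition changed_edge (Tinit Tfinal : {set {set 'I_n}}) e : bool :=
  is_edge Tinit e && ~~ is_edge Tfinal e.

End DAG.
Arguments flip_adj {n}.
Arguments DF {n}.
Arguments same_comp {n}.
Arguments changed_edge {n}.

Definition normalized (R : realFieldType) (n : nat) (p : 'I_n -> 'rV[R]_2)
  (Tinit Tfinal : {set {set 'I_n}}) (F : seq {set 'I_n}) : Prop :=
  [/\ is_solution p Tinit Tfinal F,
      forall a : 'I_(size F), exists2 b : 'I_(size F),
        same_comp Tinit F a b & changed_edge Tinit Tfinal (eps F b) &
      forall a b c : 'I_(size F), (a < b < c)%N -> same_comp Tinit F a c ->
        same_comp Tinit F a b].

(* Follow the segment eps(f_i) through the flips f_i, ..., f_h.  Call a
   triangle marked when it contains the new diagonal phi(f_q) of a flip f_q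
   reachable from f_i in D_F, and that diagonal has not been flipped since.
   Right after f_i the segment is covered by the two triangles on phi(f_i),
   and it stays covered by marked triangles: a flip f_t whose edge eps(f_t)
   lies on a marked triangle is adjacent to the corresponding f_q, hence
   reachable, and the two triangles it creates contain phi(f_t) and cover
   the two it destroys, because the flipped quadrilateral is convex.  At
   time h the segment eps(f_i) = phi(f_h) enters the interior of the
   triangle on eps(f_h) destroyed by f_h; since triangles have disjoint
   interiors, that triangle is the marked one covering it, so f_h is
   reachable. *)

From HB Require Import structures.
From mathcomp Require Import all_boot all_order all_algebra.
From mathcomp Require Import ring lra.
Set Implicit Arguments. Unset Strict Implicit. Unset Printing Implicit Defensive.
Import Order.TTheory GRing.Theory Num.Theory.
Local Open Scope ring_scope.

Section Orientation.
Variable R : realFieldType.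
Implicit Types (A B C U V W X Z : 'rV[R]_2) (s : R).

Definition cx Z := Z 0 ord0.
Definition cy Z := Z 0 ord_max.

Lemma cxD U V : cx (U + V) = cx U + cx V. Proof. by rewrite /cx mxE. Qed.
Lemma cyD U V : cy (U + V) = cy U + cy V. Proof. by rewrite /cy mxE. Qed.
Lemma cxZ s U : cx (s *: U) = s * cx U. Proof. by rewrite /cx mxE. Qed.
Lemma cyZ s U : cy (s *: U) = s * cy U. Proof. by rewrite /cy mxE. Qed.
Lemma cx0 : cx 0 = 0. Proof. by rewrite /cx mxE. Qed.
Lemma cy0 : cy 0 = 0. Proof. by rewrite /cy mxE. Qed.
Lemma cxN U : cx (- U) = - cx U. Proof. by rewrite /cx mxE. Qed.
Lemma cyN U : cy (- U) = - cy U. Proof. by rewrite /cy mxE. Qed.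

Lemma rV2P U V : cx U = cx V -> cy U = cy V -> U = V.
Proof.
move=> hx hy; apply/rowP => j; have -> : (0 : 'I_1) = ord0 by apply: val_inj.
have [-> | ->] : j = ord0 \/ j = ord_max.
  by case: j => [[|[|//]] ?]; [left | right]; apply: val_inj.
- exact: hx.
- exact: hy.
Qed.

Definition orient A B C :=
  (cx B - cx A) * (cy C - cy A) - (cy B - cy A) * (cx C - cx A).

Lemma sqr_gt0 (x : R) : x != 0 -> 0 < x * x.
Proof. by move=> x0; rewrite -expr2 exprn_even_gt0. Qed.

Lemma mulf_lt0_neq0 (x y : R) : x * y < 0 -> x != 0 /\ y != 0.
Proof. by move=> h; split; apply/eqP => E; move: h; rewrite E ?mul0r ?mulr0 ltxx. Qed.

Lemma orientC12 A B C : orient B A C = - orient A B C.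
Proof. by rewrite /orient; ring. Qed.

Lemma orient_eq12 A B : orient A A B = 0. Proof. by rewrite /orient; ring. Qed.
Lemma orient_eq13 A B : orient A B A = 0. Proof. by rewrite /orient; ring. Qed.
Lemma orient_eq23 A B : orient A B B = 0. Proof. by rewrite /orient; ring. Qed.

Lemma orient_affine A B C U V W Z al be ga : al + be + ga = 1 ->
  Z = al *: U + be *: V + ga *: W ->
  [/\ orient Z B C = al * orient U B C + be * orient V B C + ga * orient W B C,
      orient A Z C = al * orient A U C + be * orient A V C + ga * orient A W C &
      orient A B Z = al * orient A B U + be * orient A B V + ga * orient A B W].
Proof.
move=> Hs ->; have -> : al = 1 - be - ga by rewrite -Hs; ring.
by rewrite /orient !(cxD, cxZ, cyD, cyZ); split; ring.
Qed.

Lemma orient_barycentric A B C Z al be ga : al + be + ga = 1 ->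
  Z = al *: A + be *: B + ga *: C ->
  [/\ orient Z B C = al * orient A B C, orient A Z C = be * orient A B C &
      orient A B Z = ga * orient A B C].
Proof.
move=> Hs HZ; have [-> -> ->] := orient_affine A B C Hs HZ.
by rewrite /orient; split; ring.
Qed.

Lemma barycentric_orient A B C Z : orient A B C != 0 ->
  orient Z B C / orient A B C + orient A Z C / orient A B C +
    orient A B Z / orient A B C = 1 /\
  Z = (orient Z B C / orient A B C) *: A + (orient A Z C / orient A B C) *: B +
      (orient A B Z / orient A B C) *: C.
Proof.
rewrite /orient => D0; split; first by field.
by apply: rV2P; rewrite !(cxD, cxZ, cyD, cyZ); field.
Qed.

Lemma div_ge0_sgn (x d : R) : d != 0 -> 0 <= x * d -> 0 <= x / d.
Proof.
move=> d0 h; have -> : x / d = (x * d) / (d * d) by field.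
by rewrite divr_ge0 // ltW // sqr_gt0.
Qed.

Lemma div_gt0_sgn (x d : R) : d != 0 -> 0 < x * d -> 0 < x / d.
Proof.
move=> d0 h; have -> : x / d = (x * d) / (d * d) by field.
by rewrite divr_gt0 // sqr_gt0.
Qed.

Lemma orient_eq0_dependent A B C : orient A B C = 0 ->
  exists al be, ((al != 0) || (be != 0)) /\ al *: (B - A) + be *: (C - A) = 0.
Proof.
rewrite /orient => D0.
have vec0 U : cx U = 0 -> cy U = 0 -> U = 0 by move=> *; apply: rV2P; rewrite ?cx0 ?cy0.
have [x0|] := boolP ((cx C - cx A != 0) || (cx B - cx A != 0)).
  exists (cx C - cx A), (- (cx B - cx A)); rewrite oppr_eq0; split => //.
  by apply: vec0; rewrite !(cxD, cyD, cxZ, cyZ, cxN, cyN); lra.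
rewrite negb_or !negbK => /andP [/eqP xC /eqP xB].
have [y0|] := boolP ((cy C - cy A != 0) || (cy B - cy A != 0)).
  exists (cy C - cy A), (- (cy B - cy A)); rewrite oppr_eq0; split => //.
  by apply: vec0; rewrite !(cxD, cyD, cxZ, cyZ, cxN, cyN); lra.
rewrite negb_or !negbK => /andP [/eqP yC /eqP yB].
exists 1, 0; rewrite oner_eq0 scale0r addr0 scale1r; split => //.
by apply: vec0; rewrite !(cxD, cyD, cxN, cyN); lra.
Qed.

(* The barycentric coordinates of Z in ABC are the ratios of these
   orientations to [orient A B C]; products avoid the division. *)
Definition weak_inside A B C Z :=
  [/\ 0 <= orient Z B C * orient A B C, 0 <= orient A Z C * orient A B C &
      0 <= orient A B Z * orient A B C].

Definition strict_inside A B C Z :=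
  [/\ 0 < orient Z B C * orient A B C, 0 < orient A Z C * orient A B C &
      0 < orient A B Z * orient A B C].

Definition mix s U V := (1 - s) *: U + s *: V.

Lemma orient_mix s U V A B C :
  [/\ orient (mix s U V) B C = (1 - s) * orient U B C + s * orient V B C,
      orient A (mix s U V) C = (1 - s) * orient A U C + s * orient A V C &
      orient A B (mix s U V) = (1 - s) * orient A B U + s * orient A B V].
Proof. by rewrite /orient /mix !(cxD, cxZ, cyD, cyZ); split; ring. Qed.

Definition centroid A B C := (1 / 3 : R) *: (A + B + C).

Lemma orient_centroid A B C :
  [/\ orient (centroid A B C) B C = orient A B C / 3,
      orient A (centroid A B C) C = orient A B C / 3 &
      orient A B (centroid A B C) = orient A B C / 3].
Proof. by rewrite /orient /centroid !(cxD, cxZ, cyD, cyZ); split; field. Qed.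

Lemma strict_inside_centroid A B C :
  orient A B C != 0 -> strict_inside A B C (centroid A B C).
Proof.
move=> D0; have pos : 0 < orient A B C / 3 * orient A B C.
  by rewrite mulrAC divr_gt0 // sqr_gt0.
by rewrite /strict_inside; have [-> -> ->] := orient_centroid A B C.
Qed.

Lemma mix_gt0 s (c d : R) : 0 <= c -> 0 < d -> 0 < s -> s <= 1 ->
  0 < (1 - s) * c + s * d.
Proof. by move=> c0 d0 s0 s1; rewrite ltr_wpDl ?mulr_ge0 ?mulr_gt0 ?subr_ge0. Qed.

Lemma strict_inside_mix A B C Z G s : weak_inside A B C Z ->
  strict_inside A B C G -> 0 < s -> s <= 1 -> strict_inside A B C (mix s Z G).
Proof.
case=> z1 z2 z3 [g1 g2 g3] s0 s1.
rewrite /strict_inside; have [-> -> ->] := orient_mix s Z G A B C.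
by split; rewrite mulrDl -!mulrA mix_gt0.
Qed.

Definition near0 (P : R -> Prop) :=
  exists2 e, 0 < e & forall s, 0 < s -> s <= e -> P s.

Lemma near0_and (P Q : R -> Prop) : near0 P -> near0 Q -> near0 (fun s => P s /\ Q s).
Proof.
case=> e1 e10 H1 [e2 e20 H2]; exists (Num.min e1 e2); first by rewrite lt_min e10.
by move=> s s0; rewrite le_min => /andP [h1 h2]; split; [exact: H1 | exact: H2].
Qed.

Lemma near0_le1 : near0 (fun s => s <= 1).
Proof. by exists 1. Qed.

Lemma near0_mix_gt0 (c d : R) : 0 < c -> near0 (fun s => 0 < (1 - s) * c + s * d).
Proof.
move=> c0; have hp : 0 < c + `|d| by rewrite ltr_wpDr.
exists (c / (2 * (c + `|d|))); first by rewrite divr_gt0 // mulr_gt0.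
move=> s s0 se.
have h1 : s * (c + `|d|) <= c / 2.
  have -> : c / 2 = (c / (2 * (c + `|d|))) * (c + `|d|) by field; exact: lt0r_neq0.
  by rewrite ler_pM2r.
have h2 : s * (- `|d|) <= s * d by apply: ler_wpM2l; [exact: ltW | exact: lerNnormlW].
move: h1 h2; rewrite mulrDr mulrN mulrBl mul1r; lra.
Qed.

Lemma near0_witness (P : R -> Prop) : near0 P -> exists2 s, 0 < s & P s.
Proof. by case=> e e0 He; exists e => //; apply: He. Qed.

Lemma near0_strict_inside A B C Z G : strict_inside A B C Z ->
  near0 (fun s => strict_inside A B C (mix s Z G)).
Proof.
case=> z1 z2 z3.
have [e e0 He] := near0_and (near0_mix_gt0 (orient G B C * orient A B C) z1)
  (near0_and (near0_mix_gt0 (orient A G C * orient A B C) z2)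
             (near0_mix_gt0 (orient A B G * orient A B C) z3)).
exists e => // s s0 se; have [k1 [k2 k3]] := He s s0 se.
by rewrite /strict_inside; have [-> -> ->] := orient_mix s Z G A B C;
  split; rewrite mulrDl -!mulrA.
Qed.

(* Pushing Z slightly towards the centroid of ABC keeps it in the open
   triangle DEF and brings it into the open triangle ABC. *)
Lemma strict_inside_overlap A B C D E F Z : orient A B C != 0 ->
  weak_inside A B C Z -> strict_inside D E F Z ->
  exists Z', strict_inside A B C Z' /\ strict_inside D E F Z'.
Proof.
move=> D0 inABC inDEF.
have [s s0 [s1 inDEF']] :=
  near0_witness (near0_and near0_le1 (near0_strict_inside (centroid A B C) inDEF)).
exists (mix s Z (centroid A B C)); split => //.
exact: strict_inside_mix inABC (strict_inside_centroid D0) s0 s1.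
Qed.

Definition midpoint A B := (1 / 2 : R) *: (A + B).

Lemma orient_midpoint A B X :
  [/\ orient (midpoint A B) B X = orient A B X / 2,
      orient A (midpoint A B) X = orient A B X / 2 &
      orient A B (midpoint A B) = 0].
Proof. by rewrite /orient /midpoint !(cxD, cxZ, cyD, cyZ); split; field. Qed.

(* The midpoint of AB, pushed slightly towards the centroid of ABC. *)
Lemma same_side_overlap A B C E : 0 < orient A B C * orient A B E ->
  exists Z, strict_inside A B C Z /\ strict_inside A B E Z.
Proof.
move=> CE; have := lt0r_neq0 CE; rewrite mulf_eq0 negb_or => /andP [C0 E0].
have [mC1 mC2 mC3] := orient_midpoint A B C.
have [mE1 mE2 mE3] := orient_midpoint A B E.
have [_ _ g3] := orient_centroid A B C.
have half_sqr_gt0 (x : R) : x != 0 -> 0 < x / 2 * x.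
  by move=> x0; rewrite mulrAC divr_gt0 // sqr_gt0.
have [s s0 [s1 [k1 k2]]] := near0_witness (near0_and near0_le1 (near0_and
  (near0_mix_gt0 (orient (centroid A B C) B E * orient A B E) (half_sqr_gt0 _ E0))
  (near0_mix_gt0 (orient A (centroid A B C) E * orient A B E) (half_sqr_gt0 _ E0)))).
exists (mix s (midpoint A B) (centroid A B C)); split.
- apply: strict_inside_mix (strict_inside_centroid C0) s0 s1.
  by rewrite /weak_inside mC1 mC2 mC3 mul0r; split; rewrite // ltW ?half_sqr_gt0.
- rewrite /strict_inside; have [-> -> ->] := orient_mix s (midpoint A B) (centroid A B C) A B E.
  rewrite mE1 mE2 mE3 g3 mulr0 add0r -mulrA mulrAC.
  split; [move: k1 | move: k2 | by rewrite mulr_gt0 // divr_gt0];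
    by rewrite [in X in _ -> X]mulrDl -[(1 - s) * _ * _]mulrA -[s * _ * _]mulrA.
Qed.

Lemma crossing_signs (d1 d2 e1 e2 : R) :
  d1 * d2 < 0 -> e1 * e2 < 0 -> e2 - e1 = d1 - d2 ->
  [/\ 0 < d2 * e1, d1 * e1 < 0, d2 * e2 < 0 & 0 < d1 * e2].
Proof.
move=> H1 H2 E; have [d10 _] := mulf_lt0_neq0 H1.
move: d10; rewrite neq_lt => /orP [d1n|d1p].
- have d2p : 0 < d2 by nra.
  have e1p : 0 < e1 by nra.
  have e2n : e2 < 0 by nra.
  by split; nra.
- have d2n : d2 < 0 by nra.
  have e1n : e1 < 0 by nra.
  have e2p : 0 < e2 by nra.
  by split; nra.
Qed.

Lemma orient_cross_diff U V X Y :
  orient X Y V - orient X Y U = orient U V X - orient U V Y.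
Proof. by rewrite /orient; ring. Qed.

Lemma weak_inside_split U V X Y Z :
  orient U V X * orient U V Y < 0 -> orient X Y U * orient X Y V < 0 ->
  weak_inside U V X Z -> weak_inside X Y U Z \/ weak_inside X Y V Z.
Proof.
move=> H1 H2 [h1 h2 h3]; have [D0 _] := mulf_lt0_neq0 H1.
have [Hs HZ] := barycentric_orient Z D0.
move: Hs HZ (div_ge0_sgn D0 h1) (div_ge0_sgn D0 h2) (div_ge0_sgn D0 h3).
set al := _ / _; set be := orient U Z X / _; set ga := orient U V Z / _.
move=> Hs HZ al0 be0 ga0.
have [sg1 sg2 sg3 sg4] := crossing_signs H1 H2 (orient_cross_diff U V X Y).
have [EU1 EU2 EU3] := orient_affine X Y U Hs HZ.
have [EV1 EV2 _] := orient_affine X Y V Hs HZ.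
have e1 : orient V Y U = orient U V Y by rewrite /orient; ring.
have e2 : orient X V U = - orient U V X by rewrite /orient; ring.
have e3 : orient U Y V = - orient U V Y by rewrite /orient; ring.
have e4 : orient X U V = orient U V X by rewrite /orient; ring.
rewrite /weak_inside {}EU1 {}EU2 {}EU3 {}EV1 {}EV2 e1 e2 e3 e4.
rewrite !orient_eq12 !orient_eq13 !orient_eq23 !mulr0 !addr0.
by have [hX|hX] := leP 0 ((al * orient X Y U + be * orient X Y V) * orient X Y U);
  [left | right]; split; nra.
Qed.

Lemma diagonal_strict_inside U V X Y :
  orient U V X * orient U V Y < 0 -> orient X Y U * orient X Y V < 0 ->
  exists2 s, 0 < s <= 1 & strict_inside U V X (mix s X Y).
Proof.
move=> H1 H2; have [D0 _] := mulf_lt0_neq0 H1.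
have [_ sg2 _ sg4] := crossing_signs H1 H2 (orient_cross_diff U V X Y).
have [s s0 [s1 k]] := near0_witness (near0_and near0_le1
  (near0_mix_gt0 (orient U V Y * orient U V X) (sqr_gt0 D0))).
exists s; first by rewrite s0 s1.
rewrite /strict_inside; have [-> -> ->] := orient_mix s X Y U V X.
have -> : orient Y V X = orient X Y V by rewrite /orient; ring.
have -> : orient U Y X = - orient X Y U by rewrite /orient; ring.
rewrite orient_eq13 orient_eq23 !mulr0 !add0r.
by split; [nra | nra | rewrite mulrDl -!mulrA].
Qed.

End Orientation.

Section PointSet.
Variables (R : realFieldType) (n : nat) (p : 'I_n -> 'rV[R]_2).
Implicit Types (a b c : 'I_n) (Z : 'rV[R]_2) (al be ga : R).

Lemma sum_supp2 (V : zmodType) (G : 'I_n -> V) a b : a != b ->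
  (forall i, i \notin [set a; b] -> G i = 0) -> \sum_i G i = G a + G b.
Proof.
move=> ab G0; rewrite (bigD1 a) //= (bigD1 b) 1?eq_sym //= big1 ?addr0 // => i.
by case/andP=> ia ib; apply: G0; rewrite !inE negb_or ia.
Qed.

Lemma sum_supp3 (V : zmodType) (G : 'I_n -> V) a b c :
  a != b -> a != c -> b != c ->
  (forall i, i \notin [set a; b; c] -> G i = 0) -> \sum_i G i = G a + G b + G c.
Proof.
move=> ab ac bc G0; rewrite (bigD1 a) //= (bigD1 b) 1?eq_sym //= (bigD1 c) /=;
  last by rewrite !(eq_sym c) ac bc.
rewrite big1 ?addr0 ?addrA // => i /andP [/andP [ia ib] ic].
by apply: G0; rewrite !inE !negb_or ia ib.
Qed.

Definition weights3 a b c al be ga (i : 'I_n) : R :=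
  if i == a then al else if i == b then be else if i == c then ga else 0.

Section Weights3.
Variables (a b c : 'I_n) (al be ga : R).
Hypotheses (ab : a != b) (ac : a != c) (bc : b != c).
Let w := weights3 a b c al be ga.

Lemma weights3_supp i : i \notin [set a; b; c] -> w i = 0.
Proof. by rewrite !inE /w /weights3; case: (i == a); case: (i == b); case: (i == c). Qed.

Lemma weights3E : [/\ w a = al, w b = be & w c = ga].
Proof.
have ba : (b == a) = false by rewrite eq_sym (negbTE ab).
have ca : (c == a) = false by rewrite eq_sym (negbTE ac).
have cb : (c == b) = false by rewrite eq_sym (negbTE bc).
by rewrite /w /weights3 !eqxx ba ca cb.
Qed.

Lemma weights3_sum : \sum_i w i = al + be + ga.
Proof. by rewrite (sum_supp3 ab ac bc weights3_supp); have [-> -> ->] := weights3E. Qed.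

Lemma weights3_comb : \sum_i w i *: p i = al *: p a + be *: p b + ga *: p c.
Proof.
rewrite (sum_supp3 (G := fun i => w i *: p i) ab ac bc); last first.
  by move=> i /weights3_supp ->; rewrite scale0r.
by have [-> -> ->] := weights3E.
Qed.

End Weights3.

Section Triangle.
Variables (a b c : 'I_n).
Hypotheses (ab : a != b) (ac : a != c) (bc : b != c).

Lemma in_hull3E Z : in_hull p [set a; b; c] Z <-> exists al be ga,
  [/\ 0 <= al, 0 <= be, 0 <= ga, al + be + ga = 1 &
      Z = al *: p a + be *: p b + ga *: p c].
Proof.
split.
- case=> w [w0 wge0 ws wZ]; exists (w a), (w b), (w c).
  rewrite -ws -wZ (sum_supp3 ab ac bc w0).
  rewrite (sum_supp3 (G := fun i => w i *: p i) ab ac bc) // => i /w0 ->.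
  by rewrite scale0r.
- case=> al [be [ga [al0 be0 ga0 s1 ->]]].
  exists (weights3 a b c al be ga); split.
  + exact: weights3_supp.
  + by move=> i; rewrite /weights3; do 3 case: ifP => _ //.
  + by rewrite weights3_sum.
  + by rewrite weights3_comb.
Qed.

Lemma in_open3E Z : in_open p [set a; b; c] Z <-> exists al be ga,
  [/\ 0 < al, 0 < be, 0 < ga, al + be + ga = 1 &
      Z = al *: p a + be *: p b + ga *: p c].
Proof.
split.
- case=> w [w0 wgt0 ws wZ]; exists (w a), (w b), (w c).
  rewrite !wgt0 ?inE ?eqxx ?orbT // -ws -wZ (sum_supp3 ab ac bc w0).
  rewrite (sum_supp3 (G := fun i => w i *: p i) ab ac bc) // => i /w0 ->.
  by rewrite scale0r.
- case=> al [be [ga [al0 be0 ga0 s1 ->]]].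
  exists (weights3 a b c al be ga); split.
  + exact: weights3_supp.
  + have [wa wb wc] := weights3E al be ga ab ac bc.
    by move=> i; rewrite !inE -orbA; case/or3P => /eqP ->; rewrite ?wa ?wb ?wc.
  + by rewrite weights3_sum.
  + by rewrite weights3_comb.
Qed.

Lemma in_hull3_weak Z : orient (p a) (p b) (p c) != 0 ->
  in_hull p [set a; b; c] Z <-> weak_inside (p a) (p b) (p c) Z.
Proof.
move=> D0; rewrite in_hull3E; split.
- case=> al [be [ga [al0 be0 ga0 s1 HZ]]]; rewrite /weak_inside.
  have [-> -> ->] := orient_barycentric s1 HZ.
  by split; rewrite -mulrA mulr_ge0 // ltW // sqr_gt0.
- case=> h1 h2 h3; have [s1 HZ] := barycentric_orient Z D0.
  by do 3 eexists; split; [exact: div_ge0_sgn h1 | exact: div_ge0_sgn h2 |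
    exact: div_ge0_sgn h3 | exact: s1 | exact: HZ].
Qed.

Lemma in_open3_strict Z : orient (p a) (p b) (p c) != 0 ->
  in_open p [set a; b; c] Z <-> strict_inside (p a) (p b) (p c) Z.
Proof.
move=> D0; rewrite in_open3E; split.
- case=> al [be [ga [al0 be0 ga0 s1 HZ]]]; rewrite /strict_inside.
  have [-> -> ->] := orient_barycentric s1 HZ.
  by split; rewrite -mulrA mulr_gt0 // sqr_gt0.
- case=> h1 h2 h3; have [s1 HZ] := barycentric_orient Z D0.
  by do 3 eexists; split; [exact: div_gt0_sgn h1 | exact: div_gt0_sgn h2 |
    exact: div_gt0_sgn h3 | exact: s1 | exact: HZ].
Qed.

Lemma aff_indep3E : aff_indep p [set a; b; c] <-> orient (p a) (p b) (p c) != 0.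
Proof.
split=> [indep | D0].
- apply/eqP => /orient_eq0_dependent [be [ga [nz dep]]].
  have [_ wb wc] := weights3E (- (be + ga)) be ga ab ac bc.
  have w0 := indep _ (weights3_supp (- (be + ga)) be ga).
  rewrite (weights3_sum _ _ _ ab ac bc) (weights3_comb _ _ _ ab ac bc) in w0.
  have sum0 : - (be + ga) + be + ga = 0 by ring.
  have comb0 : - (be + ga) *: p a + be *: p b + ga *: p c = 0.
    by rewrite -dep; apply: rV2P; rewrite !(cxD, cxZ, cxN, cyD, cyZ, cyN); ring.
  by move: nz (w0 sum0 comb0 b) (w0 sum0 comb0 c); rewrite wb wc => /orP [] /eqP.
- move=> w w0 ws wZ.
  rewrite (sum_supp3 ab ac bc w0) in ws.
  rewrite (sum_supp3 (G := fun i => w i *: p i) ab ac bc) in wZ; last first.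
    by move=> i /w0 ->; rewrite scale0r.
  have ex := congr1 (@cx R) wZ; have ey := congr1 (@cy R) wZ.
  rewrite !(cxD, cxZ, cyD, cyZ) cx0 cy0 in ex ey.
  have wa : w a = - (w b + w c) by lra.
  set Sx := w a * cx (p a) + _ + _ in ex; set Sy := w a * cy (p a) + _ + _ in ey.
  have wbD : w b * orient (p a) (p b) (p c) =
      (cy (p c) - cy (p a)) * Sx - (cx (p c) - cx (p a)) * Sy.
    by rewrite /Sx /Sy /orient wa; ring.
  have wcD : w c * orient (p a) (p b) (p c) =
      (cx (p b) - cx (p a)) * Sy - (cy (p b) - cy (p a)) * Sx.
    by rewrite /Sx /Sy /orient wa; ring.
  move: wbD wcD; rewrite ex ey !mulr0 subrr => /eqP + /eqP.
  rewrite !mulf_eq0 (negbTE D0) !orbF => /eqP wb0 /eqP wc0.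
  move=> i; have [->|ia] := eqVneq i a; first by rewrite wa wb0 wc0 addr0 oppr0.
  have [->|ib] := eqVneq i b => //; have [->|ic] := eqVneq i c => //.
  by apply: w0; rewrite !inE (negbTE ia) (negbTE ib) (negbTE ic).
Qed.

End Triangle.

Lemma in_hull3_comb a b c Z al be ga : a != b -> a != c -> b != c ->
  0 <= al -> 0 <= be -> 0 <= ga -> 0 < al + be + ga ->
  (al + be + ga) *: Z = al *: p a + be *: p b + ga *: p c ->
  in_hull p [set a; b; c] Z.
Proof.
move=> ab ac bc al0 be0 ga0 s0 HZ; apply/in_hull3E => //.
have s0' : al + be + ga != 0 by rewrite lt0r_neq0.
exists (al / (al + be + ga)), (be / (al + be + ga)), (ga / (al + be + ga)).
split; try by rewrite divr_ge0 // ltW.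
  by field.
by apply: (scalerI s0'); rewrite HZ !scalerDr !scalerA !(mulrC (al + be + ga)) !mulfVK.
Qed.

Lemma in_open_hull (S : {set 'I_n}) Z : in_open p S Z -> in_hull p S Z.
Proof.
case=> w [w0 wgt0 ws wZ]; exists w; split => // i.
by case iS: (i \in S); [rewrite ltW ?wgt0 | rewrite w0 ?iS].
Qed.

Lemma in_hull_subset (S S' : {set 'I_n}) Z : S \subset S' -> in_hull p S Z -> in_hull p S' Z.
Proof.
move=> sub [w [w0 wge0 ws wZ]]; exists w; split => // i iS; apply: w0.
exact: contra (subsetP sub i) iS.
Qed.

Lemma in_hull2_mix a b s : a != b -> 0 <= s <= 1 ->
  in_hull p [set a; b] (mix s (p a) (p b)).
Proof.
move=> ab /andP [s0 s1].
pose w i : R := if i == a then 1 - s else if i == b then s else 0.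
have w0 i : i \notin [set a; b] -> w i = 0.
  by rewrite !inE /w; case: (i == a); case: (i == b).
have [wa wb] : w a = 1 - s /\ w b = s by rewrite /w eqxx eq_sym (negbTE ab) eqxx.
exists w; split.
- exact: w0.
- by move=> i; rewrite /w; case: (i == a); case: (i == b); rewrite ?subr_ge0.
- by rewrite (sum_supp2 ab w0) wa wb subrK.
- rewrite (sum_supp2 (G := fun i => w i *: p i) ab) ?wa ?wb //.
  by move=> i /w0 ->; rewrite scale0r.
Qed.

(* If UV separates X from Y but XY does not separate U from V, then U or V
   is a convex combination of the three other points. *)
Lemma conv_position_crossing u v x y :
  u != v -> u != x -> u != y -> v != x -> v != y -> x != y ->
  orient (p u) (p v) (p x) * orient (p u) (p v) (p y) < 0 ->
  ~ in_hull p [set v; x; y] (p u) -> ~ in_hull p [set u; x; y] (p v) ->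
  orient (p x) (p y) (p u) * orient (p x) (p y) (p v) < 0.
Proof.
move=> uv ux uy vx vy xy H notU notV.
have Ediff := orient_cross_diff (p u) (p v) (p x) (p y); move: H Ediff.
set d1 := orient _ _ (p x); set d2 := orient _ _ (p y).
set eu := orient _ _ (p u); set ev := orient _ _ (p v) => H Ediff.
have inU k : 0 <= eu * k -> 0 <= - d2 * k -> 0 <= d1 * k -> 0 < ev * k -> False.
  move=> h1 h2 h3 h4; have sumU : eu * k + - d2 * k + d1 * k = ev * k.
    by rewrite -!mulrDl; congr (_ * _); lra.
  apply: notU; apply: (in_hull3_comb vx vy xy h1 h2 h3); rewrite sumU //.
  by apply: rV2P; rewrite /eu /ev /d1 /d2 /orient !(cxD, cxZ, cyD, cyZ); ring.
have inV k : 0 <= ev * k -> 0 <= d2 * k -> 0 <= - d1 * k -> 0 < eu * k -> False.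
  move=> h1 h2 h3 h4; have sumV : ev * k + d2 * k + - d1 * k = eu * k.
    by rewrite -!mulrDl; congr (_ * _); lra.
  apply: notV; apply: (in_hull3_comb ux uy xy h1 h2 h3); rewrite sumV //.
  by apply: rV2P; rewrite /eu /ev /d1 /d2 /orient !(cxD, cxZ, cyD, cyZ); ring.
rewrite ltNge; apply/negP => nonneg; have [d10 _] := mulf_lt0_neq0 H.
move: d10; rewrite neq_lt => /orP [d1n|d1p].
- have d2p : 0 < d2 by nra.
  have [eun|eup] := leP eu 0.
  + by apply: (inU (-1)); rewrite !mulrN1; lra.
  + by apply: (inV 1); rewrite !mulr1; nra.
- have d2n : d2 < 0 by nra.
  have [eun|eup] := ltP eu 0.
  + by apply: (inV (-1)); rewrite !mulrN1; nra.
  + by apply: (inU 1); rewrite !mulr1; lra.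
Qed.

Lemma conv_position_apexes u v x y :
  u != v -> u != x -> u != y -> v != x -> v != y ->
  conv_position p ([set u; v; x] :|: [set u; v; y]) ->
  ~ in_hull p [set v; x; y] (p u) /\ ~ in_hull p [set u; x; y] (p v).
Proof.
move=> uv ux uy vx vy conv; split.
- have /conv : u \in [set u; v; x] :|: [set u; v; y] by rewrite !inE eqxx.
  congr (~ in_hull p _ _); apply/setP => z; rewrite !inE.
  have [->|zu] := eqVneq z u; first by rewrite (negbTE uv) (negbTE ux) (negbTE uy).
  by case: (z == v); case: (z == x); case: (z == y).
- have /conv : v \in [set u; v; x] :|: [set u; v; y] by rewrite !inE eqxx orbT.
  congr (~ in_hull p _ _); apply/setP => z; rewrite !inE.
  have [->|zv] := eqVneq z v; first by rewrite eq_sym (negbTE uv) (negbTE vx) (negbTE vy).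
  by case: (z == u); case: (z == x); case: (z == y).
Qed.

End PointSet.

Section Triples.
Variable n : nat.
Implicit Types (a b c u v : 'I_n) (e t : {set 'I_n}).

Lemma card3_triple t : #|t| = 3%N ->
  exists a b c, [/\ a != b, a != c, b != c & t = [set a; b; c]].
Proof.
move=> t3; have /card_gt0P [a at'] : (0 < #|t|)%N by rewrite t3.
have /cards2P [b [c [bc tE]]] : #|t :\ a| == 2%N.
  by move: (cardsD1 a t); rewrite at' t3 add1n => -[] <-.
have : (b \in t :\ a) && (c \in t :\ a) by rewrite tE !inE !eqxx orbT.
rewrite !inE => /andP [/andP [ba _] /andP [ca _]].
exists a, b, c; split => //; rewrite 1?eq_sym //.
by rewrite -(setD1K at') tE; apply/setP => x; rewrite !inE orbA.
Qed.

Lemma cards3 a b c : a != b -> a != c -> b != c -> #|[set a; b; c]| = 3%N.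
Proof.
move=> ab ac bc; rewrite (_ : [set a; b; c] = a |: [set b; c]).
  by rewrite cardsU1 cards2 bc !inE negb_or ab ac.
by apply/setP => x; rewrite !inE orbA.
Qed.

Lemma set3C12 a b c : [set a; b; c] = [set b; a; c].
Proof. by apply/setP => x; rewrite !inE (orbC (x == a)). Qed.

Lemma triangle_on_edge e t u v : u != v -> e = [set u; v] -> #|t| = 3%N ->
  e \subset t -> exists2 w, w != u /\ w != v & t = [set u; v; w].
Proof.
move=> uv eE t3 et; have /cards1P [w tDe] : #|t :\: e| == 1%N.
  by rewrite cardsDS // t3 eE cards2 uv.
have : w \in t :\: e by rewrite tDe inE.
rewrite inE eE !inE negb_or => /andP [/andP [wu wv] _].
by exists w; rewrite // -(setID t e) (setIidPr et) tDe eE.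
Qed.

End Triples.

Section Packing.
Variables (R : realFieldType) (n : nat) (p : 'I_n -> 'rV[R]_2).
Implicit Types (T : {set {set 'I_n}}) (e t : {set 'I_n}) (Z : 'rV[R]_2).

(* The part of [triangulation] preserved by every admissible flip. *)
Definition packing T :=
  (forall t, t \in T -> #|t| = 3%N /\ aff_indep p t) /\
  (forall t1 t2 Z, t1 \in T -> t2 \in T -> t1 != t2 ->
     in_open p t1 Z -> in_open p t2 Z -> False).

Lemma triangulation_packing T : triangulation p T -> packing T.
Proof. by case. Qed.

Lemma packing_triangle T t : packing T -> t \in T ->
  exists a b c, [/\ a != b, a != c, b != c, t = [set a; b; c] &
                    orient (p a) (p b) (p c) != 0].
Proof.
case=> tris _ tT; have [/card3_triple [a [b [c [ab ac bc tE]]]] indep] := tris t tT.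
by exists a, b, c; split => //; rewrite -aff_indep3E // -tE.
Qed.

Lemma packing_hull_open T t1 t2 Z : packing T -> t1 \in T -> t2 \in T ->
  in_hull p t1 Z -> in_open p t2 Z -> t1 = t2.
Proof.
move=> pT t1T t2T h1 o2; have [_ disj] := pT.
have [a [b [c [ab ac bc t1E D1]]]] := packing_triangle pT t1T.
have [a' [b' [c' [ab' ac' bc' t2E D2]]]] := packing_triangle pT t2T.
rewrite t1E in_hull3_weak // in h1; rewrite t2E in_open3_strict // in o2.
have [Z' [o1' o2']] := strict_inside_overlap D1 h1 o2.
apply/eqP; apply/negPn/negP => ne; apply: (disj _ _ Z' t1T t2T ne).
  by rewrite t1E in_open3_strict.
by rewrite t2E in_open3_strict.
Qed.

Lemma admissible_apexes T e : packing T -> admissible p T e ->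
  exists u v x y, [/\ u != v, [/\ u != x, u != y, v != x & v != y], x != y,
    e = [set u; v] & tris_of T e = [set [set u; v; x]; [set u; v; y]]].
Proof.
move=> [tris _] [/andP [/cards2P [u [v [uv eE]]] _] /eqP /cards2P [t1 [t2 [t12 trE]]] _].
have : (t1 \in tris_of T e) && (t2 \in tris_of T e) by rewrite trE !inE !eqxx orbT.
rewrite !inE => /andP [/andP [t1T et1] /andP [t2T et2]].
have [x [xu xv] t1E] := triangle_on_edge uv eE (proj1 (tris _ t1T)) et1.
have [y [yu yv] t2E] := triangle_on_edge uv eE (proj1 (tris _ t2T)) et2.
have xy : x != y by apply: contraNneq t12 => xy; rewrite t1E t2E xy.
exists u, v, x, y; rewrite -t1E -t2E.
by rewrite (eq_sym u x) (eq_sym u y) (eq_sym v x) (eq_sym v y) xu xv yu yv.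
Qed.

Lemma packing_opposite_sides T u v x y : packing T ->
  u != v -> u != x -> u != y -> v != x -> v != y ->
  [set u; v; x] \in T -> [set u; v; y] \in T -> [set u; v; x] != [set u; v; y] ->
  orient (p u) (p v) (p x) * orient (p u) (p v) (p y) < 0.
Proof.
move=> [tris disj] uv ux uy vx vy t1T t2T t12.
have [Dx Dy] : orient (p u) (p v) (p x) != 0 /\ orient (p u) (p v) (p y) != 0.
  by rewrite -!aff_indep3E //; split; [apply: (proj2 (tris _ t1T)) | apply: (proj2 (tris _ t2T))].
rewrite ltNge; apply/negP => nonneg.
have [Z [ox oy]] : exists Z, strict_inside (p u) (p v) (p x) Z /\ strict_inside (p u) (p v) (p y) Z.
  by apply: same_side_overlap; rewrite lt_neqAle eq_sym mulf_neq0.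
by apply: (disj _ _ Z t1T t2T t12); rewrite in_open3_strict.
Qed.

Lemma in_hull_quad_split u v x y Z :
  u != v -> u != x -> u != y -> v != x -> v != y -> x != y ->
  orient (p u) (p v) (p x) * orient (p u) (p v) (p y) < 0 ->
  orient (p x) (p y) (p u) * orient (p x) (p y) (p v) < 0 ->
  in_hull p [set u; v; x] Z -> in_hull p [set x; y; u] Z \/ in_hull p [set x; y; v] Z.
Proof.
move=> uv ux uy vx vy xy sep cross.
have [[Dx _] [Du Dv]] := (mulf_lt0_neq0 sep, mulf_lt0_neq0 cross).
have [xu yu xv yv] : [/\ x != u, y != u, x != v & y != v] by rewrite !(eq_sym x) !(eq_sym y).
by rewrite in_hull3_weak // !in_hull3_weak //; apply: weak_inside_split.
Qed.

Record flip_data T e u v x y : Prop := FlipData {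
  fd_uv : u != v; fd_ux : u != x; fd_uy : u != y;
  fd_vx : v != x; fd_vy : v != y; fd_xy : x != y;
  fd_edge : e = [set u; v];
  fd_left : [set u; v; x] \in T;
  fd_right : [set u; v; y] \in T;
  fd_tris : forall t, t \in T -> e \subset t -> t = [set u; v; x] \/ t = [set u; v; y];
  fd_diag : flip_diag T e = [set x; y];
  fd_flip : forall t, (t \in do_flip T e) =
    [|| (t \in T) && ~~ (e \subset t), t == [set x; y; u] | t == [set x; y; v]];
  fd_sep : orient (p u) (p v) (p x) * orient (p u) (p v) (p y) < 0;
  fd_cross : orient (p x) (p y) (p u) * orient (p x) (p y) (p v) < 0 }.

Lemma flip_dataP T e : packing T -> admissible p T e ->
  exists u v x y, flip_data T e u v x y.
Proof.
move=> pT adm; have [_ _ conv] := adm.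
have [u [v [x [y [uv [ux uy vx vy] xy eE trE]]]]] := admissible_apexes pT adm.
have trT t : t \in tris_of T e -> t \in T by rewrite inE => /andP [].
have t1T : [set u; v; x] \in T by apply: trT; rewrite trE !inE eqxx.
have t2T : [set u; v; y] \in T by apply: trT; rewrite trE !inE eqxx orbT.
have t12 : [set u; v; x] != [set u; v; y].
  apply/eqP => /setP /(_ x); rewrite !inE eqxx orbT (eq_sym x u) (eq_sym x v).
  by rewrite (negbTE ux) (negbTE vx) (negbTE xy).
have quadE : quad T e = [set u; v; x] :|: [set u; v; y].
  by rewrite /quad trE big_setU1 ?big_set1 // inE.
have diagE : flip_diag T e = [set x; y].
  apply/setP => z; rewrite /flip_diag quadE eE !inE.
  have [->|zu] := eqVneq z u; first by rewrite (negbTE ux) (negbTE uy).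
  have [->|zv] := eqVneq z v; first by rewrite (negbTE vx) (negbTE vy).
  by [].
have flipE t : (t \in do_flip T e) =
    [|| (t \in T) && ~~ (e \subset t), t == [set x; y; u] | t == [set x; y; v]].
  rewrite /do_flip diagE {2}eE imsetU1 imset_set1 !inE.
  by case: (t \in T); rewrite /= ?andbT ?andbF.
have sep := packing_opposite_sides pT uv ux uy vx vy t1T t2T t12.
move: conv; rewrite quadE => /(conv_position_apexes uv ux uy vx vy) [notU notV].
exists u, v, x, y; split => //.
- move=> t tT et; have : t \in tris_of T e by rewrite inE tT et.
  by rewrite trE !inE => /orP [] /eqP; [left | right].
- exact: conv_position_crossing.
Qed.

Section FlipData.
Variables (T : {set {set 'I_n}}) (e : {set 'I_n}) (u v x y : 'I_n).
Hypothesis fd : flip_data T e u v x y.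

Lemma flip_cover_new t Z : t \in T -> e \subset t -> in_hull p t Z ->
  in_hull p [set x; y; u] Z \/ in_hull p [set x; y; v] Z.
Proof.
case: fd => uv ux uy vx vy xy _ _ _ tris _ _ sep cross tT et.
case: (tris t tT et) => ->; first exact: (in_hull_quad_split uv ux uy vx vy xy sep cross).
have sep' : orient (p u) (p v) (p y) * orient (p u) (p v) (p x) < 0 by rewrite mulrC.
have cross' : orient (p y) (p x) (p u) * orient (p y) (p x) (p v) < 0.
  by rewrite (orientC12 (p x) (p y) (p u)) (orientC12 (p x) (p y) (p v)) mulrNN.
rewrite (set3C12 x y u) (set3C12 x y v).
by apply: (in_hull_quad_split uv uy ux vy vx _ sep' cross'); rewrite eq_sym.
Qed.

Lemma flip_cover_old Z : in_hull p [set x; y; u] Z \/ in_hull p [set x; y; v] Z ->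
  in_hull p [set u; v; x] Z \/ in_hull p [set u; v; y] Z.
Proof.
case: fd => uv ux uy vx vy xy _ _ _ _ _ _ sep cross.
have [xu xv yu yv] : [/\ x != u, x != v, y != u & y != v] by rewrite !(eq_sym x) !(eq_sym y).
case; first exact: (in_hull_quad_split xy xu xv yu yv uv cross sep).
have cross' : orient (p x) (p y) (p v) * orient (p x) (p y) (p u) < 0 by rewrite mulrC.
have sep' : orient (p v) (p u) (p x) * orient (p v) (p u) (p y) < 0.
  by rewrite (orientC12 (p u) (p v) (p x)) (orientC12 (p u) (p v) (p y)) mulrNN.
rewrite (set3C12 u v x) (set3C12 u v y).
by apply: (in_hull_quad_split xy xv xu yv yu _ cross' sep'); rewrite eq_sym.
Qed.

Lemma flip_data_packing : packing T -> packing (do_flip T e).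
Proof.
move=> pT; have [tris disj] := pT.
case: (fd) => uv ux uy vx vy xy eE t1T t2T _ _ flipE _ cross.
have [xu xv yu yv] : [/\ x != u, x != v, y != u & y != v] by rewrite !(eq_sym x) !(eq_sym y).
have [Du Dv] := mulf_lt0_neq0 cross.
have e_sub w : e \subset [set u; v; w].
  by rewrite eE; apply/subsetP => z; rewrite !inE => ->.
have old_new t Z : t \in T -> ~~ (e \subset t) -> in_open p t Z ->
    in_hull p [set x; y; u] Z \/ in_hull p [set x; y; v] Z -> False.
  move=> tT /negP et ot /flip_cover_old [] h; apply: et.
    by rewrite -(packing_hull_open pT t1T tT h ot) e_sub.
  by rewrite -(packing_hull_open pT t2T tT h ot) e_sub.
have new_new Z : in_open p [set x; y; u] Z -> in_open p [set x; y; v] Z -> False.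
  by rewrite !in_open3_strict // => -[_ _ hu] [_ _ hv]; clear -hu hv cross; nra.
split.
- move=> t; rewrite flipE => /or3P [/andP [tT _] | /eqP -> | /eqP ->]; first exact: tris.
  + by rewrite cards3 // aff_indep3E.
  + by rewrite cards3 // aff_indep3E.
move=> ta tb Z; rewrite !flipE.
case/or3P => [/andP [taT ea] | /eqP -> | /eqP ->];
  case/or3P => [/andP [tbT eb] | /eqP -> | /eqP ->]; rewrite ?eqxx // => nab oa ob.
- exact: disj taT tbT nab oa ob.
- exact: old_new taT ea oa (or_introl (in_open_hull ob)).
- exact: old_new taT ea oa (or_intror (in_open_hull ob)).
- exact: old_new tbT eb ob (or_introl (in_open_hull oa)).
- exact: new_new oa ob.
- exact: old_new tbT eb ob (or_intror (in_open_hull oa)).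
- exact: new_new ob oa.
Qed.

End FlipData.

Lemma packing_flip T e : packing T -> admissible p T e -> packing (do_flip T e).
Proof.
by move=> pT adm; have [u [v [x [y fd]]]] := flip_dataP pT adm; apply: flip_data_packing fd pT.
Qed.

End Packing.

Lemma tri_afterS n (T : {set {set 'I_n}}) F t : (t < size F)%N ->
  tri_after T F t.+1 = do_flip (tri_after T F t) (eps F t).
Proof. by move=> tF; rewrite /tri_after (take_nth set0) // foldl_rcons. Qed.

Section Coverage.
Variables (R : realFieldType) (n : nat) (p : 'I_n -> 'rV[R]_2).
Variables (Tinit : {set {set 'I_n}}) (F : seq {set 'I_n}) (i : 'I_(size F)).
Hypotheses (pTinit : packing p Tinit) (vF : valid p Tinit F).

Local Notation T := (tri_after Tinit F).
Local Notation reach := (connect (DF Tinit F) i).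

Lemma packing_tri_after t : (t <= size F)%N -> packing p (T t).
Proof.
elim: t => [|t IH] tF; first by rewrite /tri_after take0.
by rewrite tri_afterS //; apply: packing_flip (IH (ltnW tF)) (vF tF).
Qed.

Lemma flip_data_at t : (t < size F)%N ->
  exists u v x y, flip_data p (T t) (eps F t) u v x y.
Proof. by move=> tF; apply: flip_dataP (packing_tri_after (ltnW tF)) (vF tF). Qed.

Definition marked t tau := tau \in T t /\ exists q : 'I_(size F),
  [/\ (i <= q < t)%N, reach q, phi_at Tinit F q \subset tau &
      forall r, (q < r < t)%N -> eps F r != phi_at Tinit F q].

Lemma marked_adj (t : 'I_(size F)) tau : marked t tau -> eps F t \subset tau -> reach t.
Proof.
move=> [tauT [q [/andP [iq qt] iq' phiq notflipped]]] et.
apply: connect_trans iq' (connect1 _); rewrite /DF /flip_adj qt ltn_ord /=.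
apply/andP; split.
  case: eqVneq => //= _; apply/existsP; exists tau.
  by rewrite tauT phiq et.
apply/allP => r; rewrite mem_iota subnKC // => /andP [qr rt].
by apply: notflipped; rewrite qr.
Qed.

Lemma marked_keep t tau : (t < size F)%N -> marked t tau -> ~~ (eps F t \subset tau) ->
  marked t.+1 tau.
Proof.
move=> tF [tauT [q [/andP [iq qt] iq' phiq notflipped]]] et.
have [u [v [x [y fd]]]] := flip_data_at tF.
split; first by rewrite tri_afterS // (fd_flip fd) tauT et.
exists q; split => //; first by rewrite iq ltnW.
move=> r /andP [qr]; rewrite ltnS leq_eqVlt => /orP [/eqP -> | rt].
  by apply: contraNneq et => ->.
by apply: notflipped; rewrite qr.
Qed.

Lemma marked_new (t : 'I_(size F)) tau Z : (i <= t)%N -> reach t ->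
  tau \in T t -> eps F t \subset tau -> in_hull p tau Z ->
  exists2 tau', marked t.+1 tau' & in_hull p tau' Z.
Proof.
move=> it it' tauT et hZ; have [u [v [x [y fd]]]] := flip_data_at (ltn_ord t).
have new w : w \in [set u; v] -> marked t.+1 [set x; y; w].
  move=> wuv; split.
    rewrite tri_afterS // (fd_flip fd).
    by move: wuv; rewrite !inE => /orP [] /eqP ->; rewrite eqxx ?orbT.
  exists t; split => //; first by rewrite it ltnSn.
    by rewrite /phi_at (fd_diag fd); apply/subsetP => z; rewrite !inE => ->.
  by move=> r /andP [tr]; rewrite ltnS leqNgt tr.
case: (flip_cover_new fd tauT et hZ) => hZ'; [exists [set x; y; u] | exists [set x; y; v]] => //;
  by apply: new; rewrite !inE eqxx ?orbT.
Qed.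

Definition covered t := forall Z, in_hull p (eps F i) Z ->
  exists2 tau, marked t tau & in_hull p tau Z.

Lemma covered_start : covered i.+1.
Proof.
move=> Z hZ; have [u [v [x [y fd]]]] := flip_data_at (ltn_ord i).
have ei : eps F i \subset [set u; v; x].
  by rewrite (fd_edge fd); apply/subsetP => z; rewrite !inE => ->.
exact: marked_new (connect0 _ _) (fd_left fd) ei (in_hull_subset ei hZ).
Qed.

Lemma covered_step t : (i <= t)%N -> (t < size F)%N -> covered t -> covered t.+1.
Proof.
move=> it tF cov Z hZ; have [tau mtau htau] := cov Z hZ.
have [et | net] := boolP (eps F t \subset tau); last by exists tau => //; apply: marked_keep.
have [tauT _] := mtau.
exact: (marked_new (t := Ordinal tF)) it (marked_adj (t := Ordinal tF) mtau et) tauT et htau.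
Qed.

Lemma covered_until t : (i < t <= size F)%N -> covered t.
Proof.
case/andP=> it; elim: t it => // t IH; rewrite ltnS leq_eqVlt => /orP [/eqP <- _ | it tF].
  exact: covered_start.
by apply: covered_step (ltnW it) tF (IH it (ltnW tF)).
Qed.

Lemma reach_recreated (h : 'I_(size F)) : (i < h)%N ->
  phi_at Tinit F h = eps F i -> reach h.
Proof.
move=> ih phih; have [u [v [x [y fd]]]] := flip_data_at (ltn_ord h).
have [s s01 inside] := diagonal_strict_inside (fd_sep fd) (fd_cross fd).
have [Dx _] := mulf_lt0_neq0 (fd_sep fd).
have hZ : in_hull p (eps F i) (mix s (p x) (p y)).
  rewrite -phih /phi_at (fd_diag fd); apply: in_hull2_mix (fd_xy fd) _.
  by case/andP: s01 => /ltW -> ->.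
have ihF : (i < h <= size F)%N by rewrite ih ltnW.
have [tau mtau htau] := covered_until ihF hZ.
have oZ : in_open p [set u; v; x] (mix s (p x) (p y)).
  by rewrite in_open3_strict ?(fd_uv fd) ?(fd_ux fd) ?(fd_vx fd).
have pTh := packing_tri_after (ltnW (ltn_ord h)).
have tauE := packing_hull_open pTh (proj1 mtau) (fd_left fd) htau oZ.
apply: marked_adj mtau _; rewrite tauE (fd_edge fd).
by apply/subsetP => z; rewrite !inE => ->.
Qed.

End Coverage.

Theorem lemma4 (R : realFieldType) (n : nat) (p : 'I_n -> 'rV[R]_2)
  (Tinit Tfinal : {set {set 'I_n}}) (F : seq {set 'I_n})
  (i h : 'I_(size F)) :
  injective p ->
  normalized p Tinit Tfinal F ->
  same_comp Tinit F i h ->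
  (i < h)%N ->
  phi_at Tinit F h = eps F i ->
  (forall q : nat, (i < q < h)%N -> eps F q != eps F i) ->
  connect (DF Tinit F) i h.
Proof.
move=> _ [[trI _ [vF _] _] _ _] _ ih phih _.
exact: (reach_recreated (triangulation_packing trI) vF ih phih).
Qed.
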